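(* Let $A$ be a finite set and let $(v_{xy})$ be a Llull matrix on $A$ with CLC structure, and let $\xi$ be an admissible order for it (write $x <_\xi y$ when $x$ precedes $y$ in $\xi$). Then for all $x,y,z\in A$ with $x <_\xi y$ and $z\notin\{x,y\}$: $$v_{xz}\ge v_{yz},\qquad v_{zx}\le v_{zy},\qquad t_{xz}\ge t_{yz},\qquad t_{zx}\ge t_{zy}.$$
   Context: A Llull matrix on a finite set $A$ is an assignment to each ordered pair of distinct elements $x\neq y$ of $A$ of a number $v_{xy}\in[0,1]$ such that $v_{xy}+v_{yx}\le 1$. Its turnouts are $t_{xy}=v_{xy}+v_{yx}$ and its margins are $m_{xy}=v_{xy}-v_{yx}$. The matrix has CLC structure if there is a total order $\xi$ on $A$ (called an admissible order) such that, writing $x<_\xi y$ when $x$ precedes $y$ and $x'$ for the element immediately following $x$ in $\xi$ (when it exists): (i) $v_{xy}\ge v_{yx}$ whenever $x<_\xi y$; (ii) $v_{xz}=\max(v_{xy},v_{yz})$ whenever $x<_\xi y<_\xi z$; (iii) $v_{zx}=\min(v_{zy},v_{yx})$ whenever $x<_\xi y<_\xi z$; (iv) $0\le t_{xz}-t_{x'z}\le m_{xx'}$ whenever $x$ has an immediate successor $x'$ and $z\notin\{x,x'\}$. *)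

From mathcomp Require Import all_boot all_order all_algebra.
Set Implicit Arguments. Unset Strict Implicit. Unset Printing Implicit Defensive.
Import Order.TTheory GRing.Theory Num.Theory.
Local Open Scope ring_scope.

(* A Llull matrix on a finite set A: values v x y for x <> y (values on the
   diagonal are irrelevant and never used). *)
Definition llull_matrix (R : realFieldType) (A : finType) (v : A -> A -> R) : Prop :=
  forall x y : A, x != y ->
    [/\ 0 <= v x y, v x y <= 1 & v x y + v y x <= 1].

Definition turnout (R : realFieldType) (A : finType) (v : A -> A -> R) (x y : A) : R :=
  v x y + v y x.
Definition margin (R : realFieldType) (A : finType) (v : A -> A -> R) (x y : A) : R :=
  v x y - v y x.

(* A total order xi on A is represented by the list of all elements of A in
   increasing order: uniq and containing every element. *)
Definition total_order_seq (A : finType) (xi : seq A) : Prop :=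
  uniq xi /\ forall a : A, a \in xi.

Definition prec (A : finType) (xi : seq A) (x y : A) : bool :=
  (index x xi < index y xi)%N.

Definition succ_of (A : finType) (xi : seq A) (x x' : A) : bool :=
  (index x' xi == (index x xi).+1)%N.

Definition admissible_order (R : realFieldType) (A : finType)
    (v : A -> A -> R) (xi : seq A) : Prop :=
  [/\ total_order_seq xi,
      (forall x y, prec xi x y -> v y x <= v x y),
      (forall x y z, prec xi x y -> prec xi y z -> v x z = Num.max (v x y) (v y z)),
      (forall x y z, prec xi x y -> prec xi y z -> v z x = Num.min (v z y) (v y x))
    &
      (forall x x' z, succ_of xi x x' -> z != x -> z != x' ->
         0 <= turnout v x z - turnout v x' z /\
         turnout v x z - turnout v x' z <= margin v x x')].

Definition has_CLC (R : realFieldType) (A : finType) (v : A -> A -> R) : Prop :=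
  exists xi : seq A, admissible_order v xi.

From mathcomp Require Import all_boot all_order all_algebra.
From mathcomp Require Import lra zify.
Set Implicit Arguments. Unset Strict Implicit. Unset Printing Implicit Defensive.
Import Order.TTheory GRing.Theory Num.Theory.
Local Open Scope ring_scope.

(* Fix z.  Each of v(., z), v(z, .) and t(., z) is monotone along xi on any
   stretch of consecutive elements avoiding z: conditions (ii) and (iii) when z
   lies on one side, condition (iv) for the turnout.  To step over z one
   compares its predecessor p and successor s directly: conditions (iv) for the
   pairs (p, z) and (z, s), with the third element as witness, squeeze
   t(p, s) = max(v(p, z), v(z, s)) + min(v(s, z), v(z, p)) between t(s, z) and
   t(p, z), and together with (i) this forces the three inequalities for p, s. *)

Lemma trans_chain_skip (T : Type) (r : rel T) (f : nat -> T) (c n : nat) :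
  transitive r ->
  (forall k, (k.+1 < n)%N -> k != c -> k.+1 != c -> r (f k) (f k.+1)) ->
  (forall k, (k.+2 < n)%N -> k.+1 = c -> r (f k) (f k.+2)) ->
  forall i j, (i < j < n)%N -> i != c -> j != c -> r (f i) (f j).
Proof.
move=> r_trans step skip i; elim/ltn_ind=> [[//|j] IH /andP[ij jn] ic jc].
have [ji|ji] := eqVneq i j; first by subst j; apply: step.
have {}ij : (i < j)%N by move: ji => /eqP; lia.
have [jc'|jc'] := eqVneq j c; last first.
  by apply: r_trans (step j jn jc' jc); apply: IH; rewrite ?ij; lia.
case: j jc' ij IH jn jc {ji} => [//|j] jc' ij IH jn jc.
have [ji|ji] := eqVneq i j; first by subst j; apply: skip.
by apply: r_trans (skip j jn jc'); apply: IH; rewrite ?ji //; lia.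
Qed.

Lemma prec_neq (A : finType) (xi : seq A) x y : prec xi x y -> x != y.
Proof. by apply: contraTneq => ->; rewrite /prec ltnn. Qed.

Lemma succ_prec (A : finType) (xi : seq A) x x' : succ_of xi x x' -> prec xi x x'.
Proof. by rewrite /succ_of /prec => /eqP ->. Qed.

Lemma turnoutC (R : realFieldType) (A : finType) (v : A -> A -> R) x y :
  turnout v x y = turnout v y x.
Proof. exact: addrC. Qed.

Section AdmissibleOrder.

Variables (R : realFieldType) (A : finType) (v : A -> A -> R) (xi : seq A).
Hypothesis adm : admissible_order v xi.

Lemma index_xi_eq x y : (index x xi == index y xi) = (x == y).
Proof.
have [[_ xi_total] _ _ _ _] := adm.
by apply/eqP/eqP=> [|-> //]; apply: index_inj; rewrite ?xi_total.
Qed.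

Lemma succ_avoid_prec a a' z : succ_of xi a a' -> z != a -> z != a' ->
  prec xi z a || prec xi a' z.
Proof.
rewrite /succ_of /prec -!index_xi_eq => /eqP aa' za za'.
by move: za za'; rewrite aa'; lia.
Qed.

Lemma v_mono_succ a a' z : succ_of xi a a' -> z != a -> z != a' ->
  v a' z <= v a z /\ v z a <= v z a'.
Proof.
move=> aa' za za'; have [_ _ v_max v_min _] := adm.
have aa'_prec := succ_prec aa'.
case/orP: (succ_avoid_prec aa' za za') => [z_a | a'_z].
  rewrite (v_max _ _ _ z_a aa'_prec) (v_min _ _ _ z_a aa'_prec).
  by rewrite ge_min le_max !lexx !orbT.
rewrite (v_max _ _ _ aa'_prec a'_z) (v_min _ _ _ aa'_prec a'_z).
by rewrite ge_min le_max !lexx !orbT.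
Qed.

Lemma turnout_mono_succ a a' z : succ_of xi a a' -> z != a -> z != a' ->
  turnout v a' z <= turnout v a z.
Proof.
move=> aa' za za'; have [_ _ _ _ cond_iv] := adm.
by have [+ _] := cond_iv _ _ _ aa' za za'; rewrite subr_ge0.
Qed.

Lemma mono_across p z s : succ_of xi p z -> succ_of xi z s ->
  [/\ v s z <= v p z, v z p <= v z s & turnout v s z <= turnout v p z].
Proof.
move=> pz zs; have [_ v_ge v_max v_min cond_iv] := adm.
have [pz_prec zs_prec] := (succ_prec pz, succ_prec zs).
have ps_prec : prec xi p s by apply: ltn_trans zs_prec.
have [ps pz_neq] := (prec_neq ps_prec, prec_neq pz_prec).
have [sp sz] : s != p /\ s != z by rewrite eq_sym ps eq_sym (prec_neq zs_prec).
have [iv_pz iv_pz'] := cond_iv _ _ _ pz sp sz.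
have [iv_zs iv_zs'] := cond_iv _ _ _ zs pz_neq ps.
move: iv_pz iv_pz' iv_zs iv_zs' (v_ge _ _ pz_prec) (v_ge _ _ zs_prec).
rewrite /turnout /margin (v_max _ _ _ pz_prec zs_prec) (v_min _ _ _ pz_prec zs_prec).
case: (leP (v p z) (v z s)); case: (leP (v s z) (v z p)) => *; split; lra.
Qed.

Lemma mono_along (T : Type) (r : rel T) (F : A -> T) z :
  transitive r ->
  (forall a a', succ_of xi a a' -> z != a -> z != a' -> r (F a) (F a')) ->
  (forall p s, succ_of xi p z -> succ_of xi z s -> r (F p) (F s)) ->
  forall x y, prec xi x y -> z != x -> z != y -> r (F x) (F y).
Proof.
move=> r_trans step skip x y xy zx zy.
have [[xi_uniq xi_total] _ _ _ _] := adm.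
pose e k := nth z xi k.
have index_e k : (k < size xi)%N -> index (e k) xi = k by move/index_uniq; apply.
have e_neq k : (k < size xi)%N -> k != index z xi -> z != e k.
  by move=> k_lt; apply: contraNneq => ->; rewrite index_e.
have succ_e k : (k.+1 < size xi)%N -> succ_of xi (e k) (e k.+1).
  by move=> k_lt; rewrite /succ_of !index_e // ltnW.
have e_index a : e (index a xi) = a by rewrite /e nth_index ?xi_total.
rewrite -[x]e_index -[y]e_index.
apply: (trans_chain_skip (f := F \o e) (c := index z xi) (n := size xi) r_trans) => /=.
- move=> k k_lt kz k1z; apply: step; first exact: succ_e.
    by apply: e_neq => //; apply: ltnW.
  by apply: e_neq.
- move=> k k_lt k1z; have ez : e k.+1 = z by rewrite k1z e_index.
  by apply: skip; rewrite -ez; apply: succ_e => //; apply: ltnW.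
- by apply/andP; split; [exact: xy | rewrite index_mem].
- by rewrite index_xi_eq eq_sym.
- by rewrite index_xi_eq eq_sym.
Qed.

End AdmissibleOrder.

Theorem lemma3p2 (R : realFieldType) (A : finType) (v : A -> A -> R) (xi : seq A) :
  llull_matrix v -> admissible_order v xi ->
  forall x y z : A, prec xi x y -> z != x -> z != y ->
    [/\ v y z <= v x z, v z x <= v z y,
        turnout v y z <= turnout v x z & turnout v z y <= turnout v z x].
Proof.
move=> _ adm x y z xy zx zy.
have v_left : v y z <= v x z.
  apply: (mono_along adm (r := >=%R) (F := v^~ z) ge_trans) xy zx zy.
    by move=> a a' aa' za za'; have [] := v_mono_succ adm aa' za za'.
  by move=> p s pz zs; have [] := mono_across adm pz zs.
have v_right : v z x <= v z y.
  apply: (mono_along adm (r := <=%R) (F := v z) le_trans) xy zx zy.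
    by move=> a a' aa' za za'; have [] := v_mono_succ adm aa' za za'.
  by move=> p s pz zs; have [] := mono_across adm pz zs.
have t_left : turnout v y z <= turnout v x z.
  apply: (mono_along adm (r := >=%R) (F := turnout v^~ z) ge_trans) xy zx zy.
    by move=> a a' aa' za za'; apply: (turnout_mono_succ adm aa').
  by move=> p s pz zs; have [] := mono_across adm pz zs.
by split; rewrite // ![turnout v z _]turnoutC.
Qed.
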